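(* Let $F$ be a DQCNF. Starting from $F$, repeatedly replace the current DQCNF $G$ by $\varphi * G$ for some non-trivial autarky $\varphi$ of $G$, as long as $G$ has a non-trivial autarky. Then this process terminates, and regardless of the choices of autarkies made, the final result is the lean kernel $N(F)$, the largest lean sub-DQCNF of $F$.
   Context: A DQCNF $F$ consists of a finite set $X$ of universal variables, a finite set $Y$ of existential variables (disjoint from $X$), for each $y \in Y$ a dependency set $D(y) \subseteq X$, and a matrix which is a CNF, i.e. a finite set of clauses over the variables $X \cup Y$. A sub-DQCNF of $F$ is a DQCNF with the same variables and dependency sets whose matrix is a subset of the matrix of $F$. An autarky $\varphi$ of $F$ is a partial assignment that assigns to some set $\mathrm{var}(\varphi) \subseteq Y$ of existential variables boolean functions $\varphi(y)$ depending only on the variables in $D(y)$, such that every clause of $F$ containing a literal whose variable lies in $\mathrm{var}(\varphi)$ becomes a tautology after substituting $\varphi(y)$ for each $y \in \mathrm{var}(\varphi)$, i.e. evaluates to true under every assignment to all universal variables and all existential variables not in $\mathrm{var}(\varphi)$. The DQCNF $\varphi * F$ has the same variables and dependency sets as $F$, and its matrix is obtained by removing all clauses of $F$ containing a literal whose variable lies in $\mathrm{var}(\varphi)$ (the clauses satisfied by $\varphi$). An autarky $\varphi$ of $F$ is non-trivial if $\varphi * F \neq F$, i.e. it satisfies at least one clause. A DQCNF is lean if it has no non-trivial autarky. The union of two lean sub-DQCNFs of $F$ is lean, so $F$ has a unique largest lean sub-DQCNF, called the lean kernel $N(F)$. *)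

From mathcomp Require Import all_boot.

Set Implicit Arguments. Unset Strict Implicit. Unset Printing Implicit Defensive.

(* A literal is a pair (v, b):
   (v, true) is the positive literal v, (v, false) is its negation.  A DQCNF is given by universal variables X, existential variables
   Y, dependency sets D, and a matrix; sub-DQCNFs share X, Y, D. *)

Section DQCNF.
Variable V : finType.

Definition lit := (V * bool)%type.
Definition clause := {set lit}.
Definition cnf := {set clause}.

Definition wf_dqcnf (X Y : {set V}) (D : V -> {set V}) (F : cnf) : Prop :=
  [disjoint X & Y] /\
  (forall y, y \in Y -> D y \subset X) /\
  (forall C, C \in F -> forall l, l \in C -> l.1 \in X :|: Y).

Definition assignment := {ffun V -> bool}.

Definition depends_only_on (S : {set V}) (f : assignment -> bool) : Prop :=
  forall a b : assignment, (forall x, x \in S -> a x = b x) -> f a = f b.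

Definition clause_true (b : V -> bool) (C : clause) : bool :=
  [exists l in C, b l.1 == l.2].

Definition touches (S : {set V}) (C : clause) : bool :=
  [exists l in C, l.1 \in S].

Definition subst (S : {set V}) (phi : V -> assignment -> bool) (a : assignment)
  : V -> bool := fun v => if v \in S then phi v a else a v.

Definition is_autarky (X Y : {set V}) (D : V -> {set V}) (F : cnf)
    (S : {set V}) (phi : V -> assignment -> bool) : Prop :=
  S \subset Y /\
  (forall y, y \in S -> depends_only_on (D y) (phi y)) /\
  (forall C, C \in F -> touches S C ->
     forall a : assignment, clause_true (subst S phi a) C).

(* phi * F : remove the clauses satisfied by phi. *)
Definition apply_autarky (S : {set V}) (F : cnf) : cnf :=
  [set C in F | ~~ touches S C].

Definition nontrivial_autarky X Y D (F : cnf) S phi : Prop :=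
  is_autarky X Y D F S phi /\ apply_autarky S F != F.

Definition lean X Y D (F : cnf) : Prop :=
  forall S phi, ~ nontrivial_autarky X Y D F S phi.

Definition is_lean_kernel X Y D (F G : cnf) : Prop :=
  G \subset F /\ lean X Y D G /\
  (forall G' : cnf, G' \subset F -> lean X Y D G' -> G' \subset G).

Definition autarky_step X Y D (G G' : cnf) : Prop :=
  exists S phi, nontrivial_autarky X Y D G S phi /\ G' = apply_autarky S G.

End DQCNF.

From Stdlib Require Import Relations.
From Stdlib Require Wf_nat.
From mathcomp Require Import all_boot.

(* Every reduction step removes at least one clause, so the number of clauses
   decreases and the process terminates.  An autarky of a DQCNF is also an
   autarky of each of its sub-DQCNFs; hence a lean sub-DQCNF of F contains no
   clause satisfied by an applied autarky and survives every step.  A final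
   result has no non-trivial autarky, so it is itself a lean sub-DQCNF of F
   that contains all the others: it is N(F). *)

Section AutarkyReduction.
Variables (V : finType) (X Y : {set V}) (D : V -> {set V}).

Lemma apply_autarky_subset S (G : cnf V) : apply_autarky S G \subset G.
Proof. by apply/subsetP => C; rewrite inE => /andP[]. Qed.

Lemma autarky_step_proper (G G' : cnf V) :
  autarky_step X Y D G G' -> G' \proper G.
Proof.
by case=> S [phi [[_ nontriv] ->]]; rewrite properEneq nontriv apply_autarky_subset.
Qed.

Lemma autarky_step_wf : well_founded (fun G' G : cnf V => autarky_step X Y D G G').
Proof.
apply: (Wf_nat.well_founded_lt_compat _ (fun G : cnf V => #|G|)) => G' G step.
exact/ltP/proper_card/autarky_step_proper.
Qed.

Lemma is_autarky_subset (G H : cnf V) S phi :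
  G \subset H -> is_autarky X Y D H S phi -> is_autarky X Y D G S phi.
Proof.
move=> sGH [sSY [dep taut]]; split=> //; split=> // C GC.
exact: taut (subsetP sGH C GC).
Qed.

Lemma lean_subset_apply_autarky (G H : cnf V) S phi :
  G \subset H -> lean X Y D G -> is_autarky X Y D H S phi ->
  G \subset apply_autarky S H.
Proof.
move=> sGH leanG autH; apply/subsetP => C GC.
rewrite inE (subsetP sGH C GC) /=; apply/negP => touchC.
apply: (leanG S phi); split; first exact: is_autarky_subset autH.
by apply: contraTneq GC => <-; rewrite inE touchC andbF.
Qed.

Lemma autarky_steps_subset (F G : cnf V) :
  clos_refl_trans (cnf V) (autarky_step X Y D) F G -> G \subset F.
Proof.
elim=> [H H' /autarky_step_proper/proper_sub // | // | H1 H2 H3 _ s21 _ s32].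
exact: subset_trans s32 s21.
Qed.

Lemma lean_subset_autarky_steps (F G L : cnf V) :
  clos_refl_trans (cnf V) (autarky_step X Y D) F G ->
  L \subset F -> lean X Y D L -> L \subset G.
Proof.
move=> steps sLF leanL; elim: steps sLF => [H _ [S [phi [[autH _] ->]]] | // | ].
- by move=> sLH; apply: lean_subset_apply_autarky sLH leanL autH.
- by move=> H1 H2 H3 _ IH12 _ IH23 sL1; apply/IH23/IH12.
Qed.

Lemma autarky_normal_form_lean (G : cnf V) :
  (forall G', ~ autarky_step X Y D G G') -> lean X Y D G.
Proof. by move=> final S phi nontriv; apply: (final (apply_autarky S G)); exists S, phi. Qed.

End AutarkyReduction.

Theorem lemma3 (V : finType) (X Y : {set V}) (D : V -> {set V}) (F : cnf V) :
  wf_dqcnf X Y D F ->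
  (* termination: no infinite reduction sequence starting from F *)
  Acc (fun G' G => autarky_step X Y D G G') F /\
  (* any final result (no further step possible), whatever choices were made,
     is the lean kernel N(F) *)
  (forall G, clos_refl_trans (cnf V) (autarky_step X Y D) F G ->
     (forall G', ~ autarky_step X Y D G G') ->
     is_lean_kernel X Y D F G).
Proof.
move=> _; split; first exact: autarky_step_wf.
move=> G steps final; split; first exact: autarky_steps_subset steps.
split; first exact: autarky_normal_form_lean final.
by move=> L sLF leanL; exact: lean_subset_autarky_steps steps sLF leanL.
Qed.
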